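(* Let $A=\{a_1,\dots,a_k\}$ with $k\ge2$, $u_1,u_2:A\to\mathbb{R}$, and assume there is a unique efficient option $a^\star$, i.e. $u_1(a^\star)+u_2(a^\star)>u_1(a)+u_2(a)$ for all $a\ne a^\star$. Then there exists $\bar\varepsilon>0$ such that for every $\varepsilon\in(0,\bar\varepsilon)$: an $\varepsilon$-robust subgame-perfect Nash equilibrium of the two-player Price \& Choose game exists, and the outcome of every $\varepsilon$-robust subgame-perfect Nash equilibrium is $a^\star$.
   Context: Quasi-linear Price \& Choose game: $P=\{p\in\mathbb{R}^k:\sum_j p_j=0\}$; player 1 chooses $p\in P$; then player 2, having observed $p$, chooses $a_j\in A$ and pays $p_j$ to player 1; payoffs $g_1(p,a_j)=u_1(a_j)+p_j$, $g_2(p,a_j)=u_2(a_j)-p_j$. Strategy profiles are $\sigma=(\sigma_1,\sigma_2)$ with $\sigma_1\in P$, $\sigma_2:P\to A$. For $\varepsilon>0$ and $p\in P$, let $\beta_2^\varepsilon(p)=\{a\in A: g_2(p,a)+\varepsilon\ge g_2(p,a')\text{ for all }a'\in A\}$ (the $\varepsilon$-maximizers of player 2). The profile $\sigma$ is an $\varepsilon$-robust subgame-perfect Nash equilibrium if (1) for every $p\in P$, $\sigma_2(p)\in\arg\min\{g_1(p,a):a\in\beta_2^\varepsilon(p)\}$, and (2) $g_1(\sigma_1,\sigma_2(\sigma_1))+\varepsilon\ge g_1(p',\sigma_2(p'))$ for all $p'\in P$. Its outcome is $\sigma_2(\sigma_1)$. *)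

From HB Require Import structures.
From mathcomp Require Import all_boot all_order all_algebra.
From mathcomp Require Import reals.
Set Implicit Arguments. Unset Strict Implicit. Unset Printing Implicit Defensive.
Import Order.TTheory GRing.Theory Num.Theory.
Local Open Scope ring_scope.

Section PriceChoose.
Variables (R : realType) (k : nat).

Definition inP (p : 'I_k -> R) : Prop := \sum_(j < k) p j = 0.

Definition g1 (u1 : 'I_k -> R) (p : 'I_k -> R) (a : 'I_k) : R := u1 a + p a.
Definition g2 (u2 : 'I_k -> R) (p : 'I_k -> R) (a : 'I_k) : R := u2 a - p a.

Definition beta2 (u2 : 'I_k -> R) (eps : R) (p : 'I_k -> R) (a : 'I_k) : Prop :=
  forall a' : 'I_k, g2 u2 p a' <= g2 u2 p a + eps.

(* eps-robust subgame-perfect Nash equilibrium (s1, s2); s2 is only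
   constrained on P, its values outside P are irrelevant. *)
Definition robust_spne (u1 u2 : 'I_k -> R) (eps : R)
    (s1 : 'I_k -> R) (s2 : ('I_k -> R) -> 'I_k) : Prop :=
  [/\ inP s1,
      (forall p, inP p ->
         beta2 u2 eps p (s2 p) /\
         (forall a, beta2 u2 eps p a -> g1 u1 p (s2 p) <= g1 u1 p a)) &
      (forall p', inP p' -> g1 u1 p' (s2 p') <= g1 u1 s1 (s2 s1) + eps)].

End PriceChoose.

From HB Require Import structures.
From mathcomp Require Import all_boot all_order all_algebra.
From mathcomp Require Import reals.
From mathcomp Require Import lra.
Set Implicit Arguments. Unset Strict Implicit. Unset Printing Implicit Defensive.
Import Order.TTheory GRing.Theory Num.Theory.
Local Open Scope ring_scope.

(* Since prices sum to zero, player 2's payoffs always sum to S = sum_j u2 j,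
   so an eps-maximizer b of player 2 has g2 b >= S/k - eps and player 1 gets
   at most u1 b + u2 b - S/k + eps from it.  Conversely, player 1 can price so
   that a* is player 2's unique eps-maximizer with g2 a* = S/k + 2eps - 2eps/k,
   earning u1 a* + u2 a* - S/k - 2eps + 2eps/k.  When the welfare gap at a* is
   at least 4 eps, inducing any other option is strictly worse than that by
   more than eps, while the robust follower's worst reply to any price still
   leaves player 1 within eps of it. *)

Lemma exists_pos_lower_bound (R : realDomainType) (I : finType) (P : pred I)
    (f : I -> R) :
  (forall i, P i -> 0 < f i) -> exists2 e : R, 0 < e & forall i, P i -> e <= f i.
Proof.
move=> f_gt0; exists (\big[Order.min/1]_(i | P i) f i).
  by apply: (big_ind (fun x => 0 < x)) => // x y x0 y0; rewrite lt_min x0 y0.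
by move=> i Pi; apply: bigmin_le_cond.
Qed.

Section PriceChooseBounds.
Variables (R : realType) (k : nat) (u1 u2 : 'I_k -> R).
Hypothesis k_gt0 : (0 < k)%N.

Definition welfare (a : 'I_k) : R := u1 a + u2 a.

Definition mean_u2 : R := (\sum_j u2 j) / k%:R.

Lemma k_gt0R : 0 < k%:R :> R.
Proof. by rewrite ltr0n. Qed.

Lemma sum_g2 p : inP p -> \sum_j g2 u2 p j = \sum_j u2 j.
Proof. by rewrite /inP /g2 sumrB => ->; rewrite subr0. Qed.

Lemma mean_u2_le x y : \sum_j u2 j <= k%:R * x + y -> mean_u2 <= x + y / k%:R.
Proof.
move=> le_sum; rewrite /mean_u2 ler_pdivrMr ?k_gt0R // mulrDl divfK ?lt0r_neq0 ?k_gt0R //.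
by rewrite mulrC.
Qed.

Lemma g1_le_of_beta2 eps p b : inP p -> beta2 u2 eps p b ->
  g1 u1 p b <= welfare b - mean_u2 + eps.
Proof.
move=> Pp b_max.
have : \sum_j g2 u2 p j <= \sum_(j < k) (g2 u2 p b + eps) by apply: ler_sum.
rewrite sum_g2 // sumr_const card_ord -mulr_natl -[_ * _]addr0.
move/mean_u2_le; rewrite mul0r addr0 /g1 /g2 /welfare; lra.
Qed.

Lemma unique_beta2_is_max eps p a0 : 0 <= eps ->
  (forall a, a != a0 -> ~ beta2 u2 eps p a) -> forall a, g2 u2 p a <= g2 u2 p a0.
Proof.
move=> eps_ge0 uniq_a0.
have [m _ m_max] := @arg_maxP _ _ _ a0 xpredT (g2 u2 p) isT.
suff <- : m = a0 by move=> a; exact: m_max.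
apply/eqP; apply: contraT => /uniq_a0; case=> a.
by apply: le_trans (m_max a isT) _; rewrite lerDl.
Qed.

Lemma g1_le_of_unique_beta2 eps p a0 : 0 <= eps -> inP p ->
  (forall a, a != a0 -> ~ beta2 u2 eps p a) ->
  g1 u1 p a0 <= welfare a0 - mean_u2 - eps + eps / k%:R.
Proof.
move=> eps_ge0 Pp uniq_a0.
have a0_max := unique_beta2_is_max eps_ge0 uniq_a0.
have g2_le a : g2 u2 p a <= g2 u2 p a0 - eps + (if a == a0 then eps else 0).
  case: eqVneq => [->|a_neq]; first by rewrite subrK.
  rewrite addr0 lerBrDr; apply: contra_notT (uniq_a0 a a_neq); rewrite -ltNge => lt_a.
  by move=> a'; apply: le_trans (a0_max a') (ltW lt_a).
have : \sum_j g2 u2 p j <= \sum_j (g2 u2 p a0 - eps + (if j == a0 then eps else 0)).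
  by apply: ler_sum => a _; exact: g2_le.
rewrite sum_g2 // big_split /= -big_mkcond big_pred1_eq sumr_const card_ord -[_ *+ k]mulr_natl.
move/mean_u2_le; rewrite /g1 /g2 /welfare; lra.
Qed.

Definition beta2b eps p (a : 'I_k) : bool := [forall a', g2 u2 p a' <= g2 u2 p a + eps].

Lemma beta2bP eps p a : reflect (beta2 u2 eps p a) (beta2b eps p a).
Proof. exact: (iffP forallP). Qed.

Lemma beta2b_arg_max eps p a0 : 0 <= eps ->
  beta2b eps p (Order.arg_max a0 xpredT (g2 u2 p)).
Proof.
move=> eps_ge0; apply/beta2bP.
case: (@arg_maxP _ _ _ a0 xpredT (g2 u2 p) isT) => m _ m_max a'.
by apply: le_trans (m_max a' isT) _; rewrite lerDl.
Qed.

(* Player 2's tie-breaking against player 1: among its eps-maximizers, the one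
   worst for player 1; the default a0 only fixes the type's inhabitant. *)
Definition robust_choice eps (a0 : 'I_k) p : 'I_k :=
  Order.arg_min (Order.arg_max a0 xpredT (g2 u2 p)) (beta2b eps p) (g1 u1 p).

Lemma robust_choiceP eps a0 p : 0 <= eps ->
  beta2 u2 eps p (robust_choice eps a0 p) /\
  (forall a, beta2 u2 eps p a -> g1 u1 p (robust_choice eps a0 p) <= g1 u1 p a).
Proof.
move=> eps_ge0; rewrite /robust_choice.
case: (arg_minP (g1 u1 p) (beta2b_arg_max p a0 eps_ge0)) => a /beta2bP a_max a_min.
by split=> // b /beta2bP; apply: a_min.
Qed.

(* Prices under which player 2's payoffs are (S - d)/k everywhere, plus d at a0. *)
Definition favor_price (d : R) (a0 a : 'I_k) : R :=
  u2 a - ((\sum_j u2 j - d) / k%:R + (if a == a0 then d else 0)).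

Lemma g2_favor_price d a0 a :
  g2 u2 (favor_price d a0) a = (\sum_j u2 j - d) / k%:R + (if a == a0 then d else 0).
Proof. by rewrite /g2 /favor_price opprD opprK addrA subrr add0r. Qed.

Lemma favor_price_inP d a0 : inP (favor_price d a0).
Proof.
rewrite /inP /favor_price sumrB big_split /= -big_mkcond big_pred1_eq sumr_const card_ord.
by rewrite -[(_ / _) *+ k]mulr_natr divfK ?lt0r_neq0 ?k_gt0R // subrK subrr.
Qed.

Lemma beta2_favor_price eps d a0 a : eps < d ->
  beta2 u2 eps (favor_price d a0) a -> a = a0.
Proof.
move=> lt_eps_d /(_ a0); rewrite !g2_favor_price eqxx.
case: (eqVneq a a0) => // _ le_star; exfalso; lra.
Qed.

Lemma g1_favor_price d a0 :
  g1 u1 (favor_price d a0) a0 = welfare a0 - mean_u2 + d / k%:R - d.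
Proof. by rewrite /g1 /favor_price /welfare /mean_u2 eqxx mulrBl; lra. Qed.

Section WelfareGap.
Variables (astar : 'I_k) (eps : R).
Hypotheses (eps_gt0 : 0 < eps)
  (gap : forall b, b != astar -> 4 * eps <= welfare astar - welfare b).

Lemma eps_div_k_gt0 : 0 < eps / k%:R.
Proof. by rewrite divr_gt0 ?k_gt0R. Qed.

Lemma robust_spne_favor_price :
  robust_spne u1 u2 eps (favor_price (2 * eps) astar) (robust_choice eps astar).
Proof.
have eps_ge0 : 0 <= eps by exact: ltW.
have eps_lt_2eps : eps < 2 * eps by have := eps_gt0; lra.
have favor_star : robust_choice eps astar (favor_price (2 * eps) astar) = astar.
  exact: beta2_favor_price eps_lt_2eps (robust_choiceP astar _ eps_ge0).1.
split=> [|p _|p Pp]; [exact: favor_price_inP | exact: robust_choiceP |].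
rewrite favor_star g1_favor_price -mulrA.
have [b_max b_min] := robust_choiceP astar p eps_ge0.
have := eps_div_k_gt0.
have [c /andP [c_neq /beta2bP c_max] | no_other] :=
  pickP [pred c | (c != astar) && beta2b eps p c].
  have := g1_le_of_beta2 Pp c_max; have := b_min c c_max; have := gap c_neq; lra.
have uniq_star a : a != astar -> ~ beta2 u2 eps p a.
  by move=> a_neq /beta2bP a_max; move: (no_other a); rewrite /= a_neq a_max.
have -> : robust_choice eps astar p = astar.
  by apply/eqP; apply: contraT => /uniq_star.
have := g1_le_of_unique_beta2 eps_ge0 Pp uniq_star; lra.
Qed.

Lemma robust_spne_outcome s1 s2 : robust_spne u1 u2 eps s1 s2 -> s2 s1 = astar.
Proof.
case=> Ps1 s2_robust s1_opt; apply/eqP; apply: contraT => s1_neq.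
have eps_lt_2eps : eps < 2 * eps by have := eps_gt0; lra.
have favor_in := favor_price_inP (2 * eps) astar.
have favor_star : s2 (favor_price (2 * eps) astar) = astar.
  exact: beta2_favor_price eps_lt_2eps (s2_robust _ favor_in).1.
have := s1_opt _ favor_in; rewrite favor_star g1_favor_price -mulrA.
have := g1_le_of_beta2 Ps1 (s2_robust _ Ps1).1.
have := gap s1_neq; have := eps_div_k_gt0; lra.
Qed.

End WelfareGap.
End PriceChooseBounds.

Theorem proposition4 (R : realType) (k : nat) (hk : (2 <= k)%N)
    (u1 u2 : 'I_k -> R) (astar : 'I_k)
    (heff : forall a : 'I_k, a != astar -> u1 a + u2 a < u1 astar + u2 astar) :
  exists epsbar : R, 0 < epsbar /\
    forall eps : R, 0 < eps -> eps < epsbar ->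
      (exists (s1 : 'I_k -> R) (s2 : ('I_k -> R) -> 'I_k),
          robust_spne u1 u2 eps s1 s2) /\
      (forall (s1 : 'I_k -> R) (s2 : ('I_k -> R) -> 'I_k),
          robust_spne u1 u2 eps s1 s2 -> s2 s1 = astar).
Proof.
have k_gt0 : (0 < k)%N by apply: leq_trans hk.
have gap_gt0 b : b != astar -> 0 < (welfare u1 u2 astar - welfare u1 u2 b) / 4.
  by move=> /heff; rewrite /welfare; lra.
have [epsbar epsbar_gt0 epsbar_le] := exists_pos_lower_bound (P := predC1 astar) gap_gt0.
exists epsbar; split=> // eps eps_gt0 eps_lt.
have gap b : b != astar -> 4 * eps <= welfare u1 u2 astar - welfare u1 u2 b.
  by move=> b_neq; have := epsbar_le b b_neq; lra.
split.
  exists (favor_price u2 (2 * eps) astar), (robust_choice u1 u2 eps astar).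
  exact: (@robust_spne_favor_price R k u1 u2 k_gt0 astar eps eps_gt0 gap).
by move=> s1 s2; exact: @robust_spne_outcome R k u1 u2 k_gt0 astar eps eps_gt0 gap s1 s2.
Qed.
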